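(* Let $\beta:\mathcal{U}^{(1)}\to\mathbb{C}[[X]]$ be a continuous linear map. Then there is a continuous unital algebra homomorphism $\bar\beta:\mathcal{U}\to\mathbb{C}[[X]]$ extending $\beta$.
   Context: Let $S$ be the set of finitely supported sequences $r=(r_1,r_2,\dots)$ of nonnegative integers, $|r|=\sum_i r_i$, $X^r=\prod_iX_i^{r_i}$ in commuting indeterminates. $\mathcal{U}$ is the commutative unital Fréchet algebra of formal power series $f=\sum_{r\in S}\alpha_rX^r$ with $q_m(f)=\sum_r|\alpha_r|m^{|r|}<\infty$ for all $m\in\mathbb{N}$, topologized by the norms $(q_m)$. $\mathcal{U}^{(1)}$ is the closed linear subspace of $\mathcal{U}$ of homogeneous linear series $\sum_{i}\alpha_iX_i$ (with $\sum_i|\alpha_i|<\infty$), with the relative topology. $\mathbb{C}[[X]]$ is the algebra of formal power series in one indeterminate with the Fréchet topology of coordinatewise convergence. *)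

From HB Require Import structures.
From mathcomp Require Import all_boot all_order all_algebra.
From mathcomp Require Import all_classical all_reals.
From mathcomp Require Import ereal esum.
From mathcomp.real_closed Require Import complex.
Set Implicit Arguments. Unset Strict Implicit. Unset Printing Implicit Defensive.
Import Order.TTheory GRing.Theory Num.Theory.
Local Open Scope ring_scope.

(* A finitely supported sequence r = (r_1, r_2, ...) is represented by the
   finite list of its values with trailing zeros removed (canonical form). *)
Fixpoint trim (s : seq nat) : seq nat :=
  match s with
  | [::] => [::]
  | a :: s' => let t := trim s' in
               if (a == 0)%N && nilp t then [::] else a :: t
  end.

Definition is_trimmed (s : seq nat) : bool := trim s == s.

Lemma trim_idem s : trim (trim s) = trim s.
Proof.
elim: s => [|a s IH] //=.
case: ifP => [//|H] /=. by rewrite IH H.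
Qed.

Definition S := {s : seq nat | is_trimmed s}.

Definition toS (s : seq nat) : S :=
  exist _ (trim s) (introT eqP (trim_idem s)).

(* coordinate r_i (indexed from 0 here) *)
Definition coord (r : S) (i : nat) : nat := nth 0%N (proj1_sig r) i.

Definition sz (r : S) : nat := sumn (proj1_sig r).

Fixpoint below (s : seq nat) : seq (seq nat) :=
  match s with
  | [::] => [:: [::]]
  | a :: s' => [seq b :: t | b <- iota 0 a.+1, t <- below s']
  end.

Definition subl (s t : seq nat) : seq nat := [seq (x.1 - x.2)%N | x <- zip s t].

Section Series.
Variable R : realType.
Local Notation C := (mathcomp.real_closed.complex.complex R).

Definition cabs (z : C) : R :=
  let: mathcomp.real_closed.complex.Complex a b := z in Num.sqrt (a ^+ 2 + b ^+ 2).

(* A formal power series sum_r alpha_r X^r is given by its coefficient map. *)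
Definition series := S -> C.

Definition qm (m : nat) (f : series) : \bar R :=
  (\esum_(r in [set: S]) ((cabs (f r)) * (m%:R) ^+ (sz r))%:E)%E.

Definition inU (f : series) : Prop := forall m : nat, (qm m f < +oo)%E.

(* membership in U^(1): homogeneous linear series (sum_i |alpha_i| < oo
   is exactly q_1 f < oo, included in inU) *)
Definition inU1 (f : series) : Prop :=
  inU f /\ forall r : S, sz r <> 1%N -> f r = 0.

Definition addU (f g : series) : series := fun r => f r + g r.
Definition scaleU (c : C) (f : series) : series := fun r => c * f r.
Definition subU (f g : series) : series := fun r => f r - g r.
Definition oneU : series := fun r => if sz r == 0%N then 1 else 0.
(* Cauchy product: (fg)_r = sum_{r' + r'' = r} f_{r'} g_{r''} *)
Definition mulU (f g : series) : series := fun r =>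
  \sum_(t <- below (proj1_sig r)) f (toS t) * g (toS (subl (proj1_sig r) t)).

Definition fps := nat -> C.
Definition addP (a b : fps) : fps := fun n => a n + b n.
Definition scaleP (c : C) (a : fps) : fps := fun n => c * a n.
Definition oneP : fps := fun n => if n == 0%N then 1 else 0.
Definition mulP (a b : fps) : fps := fun n =>
  \sum_(k < n.+1) a k * b (n - k)%N.

(* The Frechet topology of U (relative topology on a subset D of U) has, at f,
   the neighbourhood base {g | q_m(g - f) < eps}; C[[X]] with coordinatewise
   convergence has, at a, the neighbourhood base
   {b | forall n <= N, |b_n - a_n| < eps}. *)
Definition contOn (D : series -> Prop) (T : series -> fps) : Prop :=
  forall f, D f ->
  forall (N : nat) (eps : R), 0 < eps ->
  exists (m : nat) (delta : R), 0 < delta /\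
    forall g, D g -> (qm m (subU g f) < delta%:E)%E ->
      forall n, (n <= N)%N -> cabs (T g n - T f n) < eps.

Definition linearOn (D : series -> Prop) (T : series -> fps) : Prop :=
  (forall f g, D f -> D g -> T (addU f g) = addP (T f) (T g)) /\
  (forall c f, D f -> T (scaleU c f) = scaleP c (T f)).

Definition unital_alg_homU (T : series -> fps) : Prop :=
  linearOn inU T /\
  (forall f g, inU f -> inU g -> T (mulU f g) = mulP (T f) (T g)) /\
  T oneU = oneP.

End Series.

(* Put b_i := beta(X_i) in C[[X]].  Continuity of beta at 0, tested on the
   series c X_i with q_m(c X_i) = |c| m, bounds the coefficients of order at
   most N of all the b_i by a single constant; hence the coefficients of order
   at most N of the monomials b^r = prod_i b_i^(r_i) are bounded by m^|r| for
   a suitable m.  For f in U the family (f_r b^r)_r is therefore absolutely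
   summable coefficientwise, with sum dominated by q_m(f): this defines
   betabar f := sum_r f_r b^r, which is linear and continuous.  It is
   multiplicative because the Cauchy product of two absolutely summable
   families may be regrouped along the fibres r' + r'' = r, and it extends
   beta because the two maps agree on finite truncations of a linear series,
   which converge to it in U. *)
From Pilot Require Import Defs.
From mathcomp Require Import all_boot all_order all_algebra.
From mathcomp Require Import all_classical all_reals.
From mathcomp Require Import ereal esum.
From mathcomp.real_closed Require Import complex.
From mathcomp Require Import ring lra.
Set Implicit Arguments. Unset Strict Implicit. Unset Printing Implicit Defensive.
Import Order.TTheory GRing.Theory Num.Theory.
Local Open Scope classical_set_scope.
Local Open Scope ring_scope.

Section ComplexModulus.
Variable R : realType.
Local Notation C := (complex R).
Implicit Types x y z : C.

Lemma cabs_ge0 z : 0 <= cabs z.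
Proof. by case: z => a b; exact: sqrtr_ge0. Qed.

Lemma cabsD x y : cabs (x + y) <= cabs x + cabs y.
Proof. exact: le_normcD. Qed.

Lemma cabsM x y : cabs (x * y) = cabs x * cabs y.
Proof. exact: Normc.normcM. Qed.

Lemma cabsN x : cabs (- x) = cabs x.
Proof. exact: normcN. Qed.

Lemma cabs0 : cabs (0 : C) = 0.
Proof. by rewrite /cabs /= expr0n /= addr0 sqrtr0. Qed.

Lemma cabs1 : cabs (1 : C) = 1.
Proof. exact: Normc.normc1. Qed.

Lemma cabs_eq0 z : cabs z = 0 -> z = 0.
Proof. exact: Normc.eq0_normc. Qed.

Lemma cabs_gt0 z : z != 0 -> 0 < cabs z.
Proof. by move=> nz; rewrite lt_def cabs_ge0 andbT; apply: contra nz => /eqP/cabs_eq0->. Qed.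

Lemma distcC x y : cabs (x - y) = cabs (y - x).
Proof. by rewrite -cabsN opprB. Qed.

Lemma distcD x y z : cabs (x - z) <= cabs (x - y) + cabs (y - z).
Proof. by apply: le_trans (cabsD _ _); rewrite addrA subrK. Qed.

Lemma cabs_RtoC (a : R) : cabs a%:C%C = `|a|.
Proof. by rewrite /cabs /= expr0n /= addr0 sqrtr_sqr. Qed.

Lemma cabs_Re z : `|complex.Re z| <= cabs z.
Proof.
case: z => a b /=; rewrite -sqrtr_sqr ler_sqrt ?addr_ge0 ?sqr_ge0 //.
by rewrite lerDl sqr_ge0.
Qed.

Lemma cabs_Im z : `|complex.Im z| <= cabs z.
Proof.
case: z => a b /=; rewrite -sqrtr_sqr ler_sqrt ?addr_ge0 ?sqr_ge0 //.
by rewrite lerDr sqr_ge0.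
Qed.

Lemma cabs_sum_le (I : Type) (s : seq I) (h : I -> C) :
  cabs (\sum_(i <- s) h i) <= \sum_(i <- s) cabs (h i).
Proof.
elim: s => [|a s IH]; first by rewrite !big_nil cabs0.
by rewrite !big_cons; apply: le_trans (cabsD _ _) _; exact: lerD.
Qed.

Lemma cabs_small_eq0 z : (forall e : R, 0 < e -> cabs z < e) -> z = 0.
Proof.
move=> small; apply/eqP/negPn/negP => /cabs_gt0 z_gt0.
by have := small _ z_gt0; rewrite ltxx.
Qed.

End ComplexModulus.

Section UnconditionalSums.
Variable R : realType.
Local Notation C := (complex R).
Variable T : choiceType.
Implicit Types (w : T -> R) (h g : T -> C).

Lemma sum_le_sub_seq w (F0 F : seq T) : (forall x, 0 <= w x) -> uniq F0 -> uniq F ->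
  {subset F0 <= F} -> \sum_(x <- F0) w x <= \sum_(x <- F) w x.
Proof.
move=> w0 u0 u sub; rewrite [X in _ <= X](bigID (mem F0)) /=.
have -> : \sum_(x <- F | x \in F0) w x = \sum_(x <- F0) w x.
  rewrite -big_filter; apply: perm_big; apply: uniq_perm; rewrite ?filter_uniq // => x.
  by rewrite mem_filter; apply/andP/idP => [[]//|xF]; split=> //; exact: sub.
by rewrite lerDl sumr_ge0.
Qed.

Lemma esum_ge_seq w (F : seq T) : (forall x, 0 <= w x) -> uniq F ->
  ((\sum_(x <- F) w x)%:E <= \esum_(x in [set: T]) (w x)%:E)%E.
Proof.
move=> w0 u; apply: esum_ge; exists [set` F]; first by split => //; exact: finite_seq.
by rewrite -fsbig_seq // sumEFin.
Qed.

Lemma esum_le_seq w (B : R) :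
  (forall F : seq T, uniq F -> \sum_(x <- F) w x <= B) ->
  (\esum_(x in [set: T]) (w x)%:E <= B%:E)%E.
Proof.
move=> H; apply: ge_ereal_sup => _ [X [finX _] <-].
by rewrite fsbig_finite // sumEFin lee_fin; apply: H; exact: finmap.fset_uniq.
Qed.

Lemma esum_approx_seq w (e : R) : (forall x, 0 <= w x) ->
  (\esum_(x in [set: T]) (w x)%:E < +oo)%E -> 0 < e ->
  exists F0 : seq T, uniq F0 /\
    fine (\esum_(x in [set: T]) (w x)%:E) - e < \sum_(x <- F0) w x.
Proof.
move=> w0 fin e0; set E := esum _ _.
have E0 : (0 <= E)%E by apply: esum_ge0 => x _; rewrite lee_fin.
have Efin : E \is a fin_num by rewrite ge0_fin_numE.
have : ((fine E - e)%:E < E)%E.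
  by rewrite -[X in (_ < X)%E](fineK Efin) lte_fin ltrBlDr ltrDl.
move=> /ereal_sup_gt [_ [X [finX _] <-]].
rewrite fsbig_finite // sumEFin lte_fin => H.
by exists (finmap.enum_fset (fset_set X)); split => //; exact: finmap.fset_uniq.
Qed.

(* Finite subsets of T are represented by duplicate-free sequences. *)
Definition has_sum h (z : C) := forall e : R, 0 < e -> exists F0 : seq T,
  forall F : seq T, uniq F -> {subset F0 <= F} -> cabs (\sum_(x <- F) h x - z) < e.

Definition bounded_sums w := exists B : R,
  forall F : seq T, uniq F -> \sum_(x <- F) w x <= B.

Lemma has_sum_unique h z1 z2 : has_sum h z1 -> has_sum h z2 -> z1 = z2.
Proof.
move=> H1 H2; apply/eqP; rewrite -subr_eq0; apply/eqP/cabs_small_eq0 => e e0.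
have e2 : 0 < e / 2 by rewrite divr_gt0.
have [F1 HF1] := H1 _ e2; have [F2 HF2] := H2 _ e2.
have u := undup_uniq (F1 ++ F2).
have s1 : {subset F1 <= undup (F1 ++ F2)} by move=> x; rewrite mem_undup mem_cat => ->.
have s2 : {subset F2 <= undup (F1 ++ F2)}.
  by move=> x; rewrite mem_undup mem_cat orbC => ->.
have := HF1 _ u s1; have := HF2 _ u s2; set s := \sum_(x <- _) _ => a b.
apply: le_lt_trans (distcD z1 s z2) _; rewrite distcC [e]splitr; exact: ltrD.
Qed.

Definition sum_of h : C :=
  match pselect (exists z, has_sum h z) with
  | left P => proj1_sig (cid P)
  | right _ => 0
  end.

Lemma sum_ofE h z : has_sum h z -> sum_of h = z.
Proof.
move=> H; rewrite /sum_of; case: pselect => [P|[]]; last by exists z.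
by case: (cid P) => /= z' H'; exact: has_sum_unique H' H.
Qed.

Lemma eq_has_sum h g z : (forall x, h x = g x) -> has_sum h z -> has_sum g z.
Proof. by move=> e; rewrite (funext e). Qed.

Lemma has_sum0 : has_sum (fun _ => 0) 0.
Proof. by move=> e e0; exists [::] => F _ _; rewrite big1 // subr0 cabs0. Qed.

Lemma has_sumD h g zh zg : has_sum h zh -> has_sum g zg ->
  has_sum (fun x => h x + g x) (zh + zg).
Proof.
move=> H G e e0; have e2 : 0 < e / 2 by rewrite divr_gt0.
have [F1 HF1] := H _ e2; have [F2 HF2] := G _ e2.
exists (F1 ++ F2) => F u sub.
have s1 : {subset F1 <= F} by move=> x xF; apply: sub; rewrite mem_cat xF.
have s2 : {subset F2 <= F} by move=> x xF; apply: sub; rewrite mem_cat xF orbT.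
rewrite big_split /= opprD addrACA.
by apply: le_lt_trans (cabsD _ _) _; rewrite [e]splitr; exact: ltrD (HF1 _ u s1) (HF2 _ u s2).
Qed.

Lemma mul_div_succ_le (x e : R) : 0 <= x -> 0 <= e -> x * (e / (x + 1)) <= e.
Proof.
move=> x0 e0; rewrite mulrA ler_pdivrMr ?ltr_wpDl //.
by rewrite mulrDr mulr1 mulrC lerDl.
Qed.

Lemma has_sumZ (c : C) h z : has_sum h z -> has_sum (fun x => c * h x) (c * z).
Proof.
move=> H e e0; have c1 : 0 < cabs c + 1 by rewrite ltr_wpDl // cabs_ge0.
have [F0 HF0] := H _ (divr_gt0 e0 c1); exists F0 => F u sub.
rewrite -mulr_sumr -mulrBr cabsM.
apply: le_lt_trans (_ : cabs c * (e / (cabs c + 1)) < e).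
  by apply: ler_wpM2l; [exact: cabs_ge0 | exact: ltW (HF0 _ u sub)].
by rewrite mulrA ltr_pdivrMr // mulrDr mulr1 mulrC ltrDl.
Qed.

Lemma has_sumN h z : has_sum h z -> has_sum (fun x => - h x) (- z).
Proof.
move=> /(has_sumZ (-1)); rewrite mulN1r; apply: eq_has_sum => x; exact: mulN1r.
Qed.

Lemma has_sumB h g zh zg : has_sum h zh -> has_sum g zg ->
  has_sum (fun x => h x - g x) (zh - zg).
Proof. by move=> H G; exact: has_sumD H (has_sumN G). Qed.

Lemma has_sum_big (I : Type) (s : seq I) (H : I -> T -> C) (z : I -> C) :
  (forall i, has_sum (H i) (z i)) ->
  has_sum (fun x => \sum_(i <- s) H i x) (\sum_(i <- s) z i).
Proof.
move=> Hs; elim: s => [|a s IH].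
  by rewrite big_nil; apply: eq_has_sum has_sum0 => x; rewrite big_nil.
by rewrite big_cons; apply: eq_has_sum (has_sumD (Hs a) IH) => x; rewrite big_cons.
Qed.

Lemma has_sum1 h (x0 : T) : (forall y, y != x0 -> h y = 0) -> has_sum h (h x0).
Proof.
move=> H e e0; exists [:: x0] => F u sub.
have x0F : x0 \in F by apply: sub; rewrite inE.
rewrite (big_rem x0) //= big_seq big1 ?addr0 ?subrr ?cabs0 // => y.
by rewrite mem_rem_uniq // inE => /andP[ne _]; exact: H.
Qed.

Lemma has_sum_cabs_le h z (B : R) :
  (forall F : seq T, uniq F -> \sum_(x <- F) cabs (h x) <= B) -> has_sum h z -> cabs z <= B.
Proof.
move=> HB H; rewrite leNgt; apply/negP => Bz.
have [F0 HF0] : exists F0 : seq T, forall F, uniq F -> {subset F0 <= F} ->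
    cabs (\sum_(x <- F) h x - z) < cabs z - B by apply: H; rewrite subr_gt0.
have := HF0 _ (undup_uniq F0) (fun x => ltac:(by rewrite mem_undup)).
set s := \sum_(x <- _) _ => sz.
have sB : cabs s <= B by apply: le_trans (cabs_sum_le _ _) (HB _ (undup_uniq F0)).
have := distcD z s 0; rewrite !subr0 distcC; lra.
Qed.

Lemma has_sum_nonneg w : (forall x, 0 <= w x) -> bounded_sums w ->
  exists W : R, has_sum (fun x => (w x)%:C%C) W%:C%C.
Proof.
move=> w0 [B HB].
have fin : (\esum_(x in [set: T]) (w x)%:E < +oo)%E.
  exact: le_lt_trans (esum_le_seq HB) (ltry _).
set E := esum _ _ in fin.
have Efin : E \is a fin_num.
  by rewrite ge0_fin_numE // esum_ge0 // => x _; rewrite lee_fin.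
exists (fine E) => e e0.
have [F0 [u0 HF0]] := esum_approx_seq w0 fin e0.
exists F0 => F u sub.
rewrite -rmorph_sum -rmorphB cabs_RtoC.
have le1 := sum_le_sub_seq w0 u0 u sub.
have le2 : \sum_(x <- F) w x <= fine E by rewrite -lee_fin fineK //; exact: esum_ge_seq.
rewrite ler0_norm ?subr_le0 //; lra.
Qed.

Lemma maxr0_sub (a : R) : Num.max a 0 - Num.max (- a) 0 = a.
Proof.
have [a0|a0] := leP 0 a; first by rewrite max_r ?subr0 // oppr_le0.
by rewrite max_l ?sub0r ?opprK // oppr_ge0 ltW.
Qed.

(* Split h into the positive and negative parts of its real and imaginary
   parts. *)
Lemma has_sum_exists h : bounded_sums (fun x => cabs (h x)) -> exists z, has_sum h z.
Proof.
move=> [B HB].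
have part (q : T -> R) : (forall x, `|q x| <= cabs (h x)) ->
    exists W, has_sum (fun x => (Num.max (q x) 0)%:C%C) W%:C%C.
  move=> qh; have qh' x : 0 <= Num.max (q x) 0 <= cabs (h x).
    by rewrite le_max lexx orbT ge_max cabs_ge0 andbT (le_trans (ler_norm _) (qh x)).
  apply: has_sum_nonneg; first by move=> x; case/andP: (qh' x).
  exists B => F u; apply: le_trans (HB F u); apply: ler_sum => x _.
  by case/andP: (qh' x).
have [P1 H1] := part _ (fun x => cabs_Re (h x)).
have [N1 H2] := part (fun x => - complex.Re (h x)) (fun x => ltac:(by rewrite normrN cabs_Re)).
have [P2 H3] := part _ (fun x => cabs_Im (h x)).
have [N2 H4] := part (fun x => - complex.Im (h x)) (fun x => ltac:(by rewrite normrN cabs_Im)).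
eexists; apply: eq_has_sum (has_sumD (has_sumB H1 H2) (has_sumZ 'i%C (has_sumB H3 H4))) => x.
by rewrite -!rmorphB !maxr0_sub -complexE.
Qed.

End UnconditionalSums.

Section ProductSums.
Variable R : realType.
Local Notation C := (complex R).
Variables T U : choiceType.

Lemma has_sum_fibres (phi : T -> U) (fibre : U -> seq T) (h : T -> C) z :
  (forall u, uniq (fibre u)) -> (forall u x, (x \in fibre u) = (phi x == u)) ->
  has_sum h z -> has_sum (fun u => \sum_(x <- fibre u) h x) z.
Proof.
move=> ufib mfib H e e0; have [F0 HF0] := H _ e0.
exists (map phi F0) => Rl u sub.
rewrite -(big_map fibre xpredT (fun s => \sum_(x <- s) h x)) -big_flatten /=; apply: HF0.
  elim: Rl u {sub} => [//|a Rl IH] /= /andP[aR uR].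
  rewrite cat_uniq ufib IH // andbT /=; apply/hasPn => x /flattenP [s /mapP [b bR ->] xs].
  rewrite mfib in xs; rewrite /= mfib (eqP xs); apply/negP => /eqP ab.
  by move: aR; rewrite -ab bR.
move=> x xF0; apply/flattenP; exists (fibre (phi x)); last by rewrite mfib.
by apply: map_f; apply: sub; exact: map_f.
Qed.

Lemma allpairs_pair_uniq (F : seq T) (G : seq U) :
  uniq F -> uniq G -> uniq [seq (a, b) | a <- F, b <- G].
Proof. by move=> uF uG; apply: allpairs_uniq => // [[a b] [a' b']] _ _ /= [-> ->]. Qed.

Lemma big_allpairs_mul (K : comPzSemiRingType) (F : seq T) (G : seq U)
    (u : T -> K) (v : U -> K) :
  \sum_(p <- [seq (a, b) | a <- F, b <- G]) u p.1 * v p.2 =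
  (\sum_(a <- F) u a) * (\sum_(b <- G) v b).
Proof. by rewrite big_allpairs mulr_suml; apply: eq_bigr => a _; rewrite mulr_sumr. Qed.

Lemma bounded_sums_mul (u : T -> C) (v : U -> C) :
  bounded_sums (fun x => cabs (u x)) -> bounded_sums (fun y => cabs (v y)) ->
  bounded_sums (fun p : T * U => cabs (u p.1 * v p.2)).
Proof.
move=> [Bu Hu] [Bv Hv]; exists (Bu * Bv) => X uX.
pose F := undup (map fst X); pose G := undup (map snd X).
apply: le_trans (sum_le_sub_seq (F := [seq (a, b) | a <- F, b <- G]) _ uX _ _) _.
- by move=> p; exact: cabs_ge0.
- by apply: allpairs_pair_uniq; exact: undup_uniq.
- by move=> [a b] abX; apply: allpairs_f; rewrite mem_undup; apply/mapP; exists (a, b).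
rewrite (eq_bigr (fun p => cabs (u p.1) * cabs (v p.2))) => [|p _]; last exact: cabsM.
rewrite (big_allpairs_mul _ _ (fun a => cabs (u a)) (fun b => cabs (v b))).
apply: ler_pM; try by apply: sumr_ge0 => x _; exact: cabs_ge0.
  by apply: Hu; exact: undup_uniq.
by apply: Hv; exact: undup_uniq.
Qed.

Lemma has_sumM (u : T -> C) (v : U -> C) A B :
  has_sum u A -> has_sum v B ->
  bounded_sums (fun x => cabs (u x)) -> bounded_sums (fun y => cabs (v y)) ->
  has_sum (fun p : T * U => u p.1 * v p.2) (A * B).
Proof.
move=> HA HB bu bv; have [Z HZ] := has_sum_exists (bounded_sums_mul bu bv).
suff -> : A * B = Z by [].
have [Bu Hu] := bu; have Bu0 : 0 <= Bu by have := Hu [::] isT; rewrite big_nil.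
apply/eqP; rewrite -subr_eq0; apply/eqP/cabs_small_eq0 => e e0.
have e3 : 0 < e / 3 by rewrite divr_gt0.
have [FA HFA] := HA _ (divr_gt0 e3 (ltr_wpDl (cabs_ge0 B) ltr01)).
have [FB HFB] := HB _ (divr_gt0 e3 (ltr_wpDl Bu0 ltr01)).
have [F0 HF0] := HZ _ e3.
pose F := undup (FA ++ map fst F0); pose G := undup (FB ++ map snd F0).
have uF : uniq F by exact: undup_uniq.
have uG : uniq G by exact: undup_uniq.
have sub0 : {subset F0 <= [seq (a, b) | a <- F, b <- G]}.
  move=> [a b] pF0; apply: allpairs_f; rewrite mem_undup mem_cat; apply/orP; right;
    by apply/mapP; exists (a, b).
have hZ := HF0 _ (allpairs_pair_uniq uF uG) sub0; rewrite big_allpairs_mul in hZ.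
have hA := HFA _ uF (fun x xF => ltac:(by rewrite mem_undup mem_cat xF)).
have hB := HFB _ uG (fun x xF => ltac:(by rewrite mem_undup mem_cat xF)).
set sA := \sum_(i <- F) u i in hZ hA; set sB := \sum_(i <- G) v i in hZ hB.
have sA_le : cabs sA <= Bu by apply: le_trans (cabs_sum_le _ _) (Hu _ uF).
have hAB : cabs (sA * sB - A * B) <= e / 3 + e / 3.
  have -> : sA * sB - A * B = sA * (sB - B) + (sA - A) * B by ring.
  apply: le_trans (cabsD _ _) _; rewrite !cabsM; apply: lerD.
    apply: le_trans (mul_div_succ_le Bu0 (ltW e3)).
    by apply: ler_pM; rewrite ?cabs_ge0 // ltW.
  rewrite mulrC; apply: le_trans (mul_div_succ_le (cabs_ge0 B) (ltW e3)).
  by apply: ler_pM; rewrite ?cabs_ge0 // ltW.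
apply: le_lt_trans (distcD (A * B) (sA * sB) Z) _; rewrite (distcC (A * B)).
have -> : e = e / 3 + e / 3 + e / 3 by field.
exact: ler_ltD hAB hZ.
Qed.

End ProductSums.

Section Multiindices.

Lemma nth_trim s i : nth 0%N (trim s) i = nth 0%N s i.
Proof.
elim: s i => [//|a s IH] i /=.
case: ifP => [/andP[/eqP a0 /nilP st]|_]; last by case: i.
by case: i => [|i] //=; rewrite -IH st nth_nil.
Qed.

Lemma sumn_trim s : sumn (trim s) = sumn s.
Proof.
elim: s => [//|a s IH] /=; case: ifP => [/andP[/eqP a0 /nilP st]|_] /=.
  by rewrite a0 -IH st.
by rewrite IH.
Qed.

Lemma trim_nil s : (forall i, nth 0%N s i = 0%N) -> trim s = [::].
Proof.
elim: s => [//|a s IH] H /=.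
by rewrite IH => [|i]; [rewrite (H 0%N : a = 0%N) | exact: (H i.+1)].
Qed.

Lemma eq_trim s t : (forall i, nth 0%N s i = nth 0%N t i) -> trim s = trim t.
Proof.
elim: s t => [|a s IH] t H.
  by rewrite /= trim_nil // => i; rewrite -H nth_nil.
case: t H => [|b t] H.
  by rewrite [RHS]/= trim_nil // => i; rewrite H nth_nil.
by rewrite /= (IH t (fun i => H i.+1)) (H 0%N : a = b).
Qed.

Lemma trim_val (r : S) : trim (proj1_sig r) = proj1_sig r.
Proof. by case: r => s /= /eqP. Qed.

Lemma S_eq (r1 r2 : S) : (forall i, Defs.coord r1 i = Defs.coord r2 i) -> r1 = r2.
Proof. by move=> H; apply: val_inj; rewrite /= -trim_val -[RHS]trim_val; exact: eq_trim. Qed.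

Lemma coord_toS s i : Defs.coord (toS s) i = nth 0%N s i.
Proof. exact: nth_trim. Qed.

Lemma toS_val (r : S) : toS (proj1_sig r) = r.
Proof. by apply: S_eq => i; rewrite coord_toS. Qed.

Lemma sz_toS s : sz (toS s) = sumn s.
Proof. exact: sumn_trim. Qed.

Lemma nth_sumn0 s : sumn s = 0%N -> forall i, nth 0%N s i = 0%N.
Proof.
elim: s => [|b s IH] /= h i; first by rewrite nth_nil.
move: h => /eqP; rewrite addn_eq0 => /andP[/eqP b0 /eqP h].
by case: i => [|i] //=; exact: IH.
Qed.

Lemma sz_eq0 r : sz r = 0%N -> r = toS [::].
Proof. by move=> r0; apply: S_eq => i; rewrite coord_toS nth_nil; exact: nth_sumn0. Qed.

Definition unitS (i : nat) : S := toS (rcons (nseq i 0%N) 1%N).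

Lemma sz_unitS i : sz (unitS i) = 1%N.
Proof. by rewrite sz_toS -cats1 sumn_cat sumn_nseq. Qed.

Lemma trimmed_sumn1 s : trim s = s -> sumn s = 1%N ->
  s = rcons (nseq (size s).-1 0%N) 1%N.
Proof.
elim: s => [//|a s IH] /= ts.
have ts' : trim s = s by move: ts; case: ifP => // _ [].
case: a ts => [|[|a]] ts /=.
- by rewrite add0n => s1; rewrite {1}(IH ts' s1); case: s {IH ts ts'} s1.
- move=> /eqP; rewrite -{2}[1%N]addn0 eqn_add2l => /eqP s0.
  by have := trim_nil (nth_sumn0 s0); rewrite ts' => ->.
- by rewrite !addSn.
Qed.

Lemma sz_eq1 (r : S) : sz r = 1%N -> r = unitS (size (proj1_sig r)).-1.
Proof. by move=> r1; rewrite /unitS -(trimmed_sumn1 (trim_val r) r1) toS_val. Qed.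

Fixpoint addl (s t : seq nat) : seq nat :=
  match s, t with
  | [::], t => t
  | s, [::] => s
  | a :: s', b :: t' => (a + b)%N :: addl s' t'
  end.

Lemma nth_addl s t i : nth 0%N (addl s t) i = (nth 0%N s i + nth 0%N t i)%N.
Proof.
elim: s t i => [|a s IH] [|b t] i //=; rewrite ?nth_nil ?addn0 //.
by case: i => [|i] //=.
Qed.

Definition addS (a b : S) : S := toS (addl (proj1_sig a) (proj1_sig b)).

Lemma coord_addS a b i : Defs.coord (addS a b) i = (Defs.coord a i + Defs.coord b i)%N.
Proof. by rewrite coord_toS nth_addl. Qed.

Lemma mem_below s t : (t \in below s) =
  (size t == size s) && [forall i : 'I_(size s), nth 0%N t i <= nth 0%N s i]%N.
Proof.
elim: s t => [|a s IH] t.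
  by rewrite /= inE; case: t => //=; apply/esym/forallP => [[]].
have -> : below (a :: s) = [seq b :: t | b <- iota 0 a.+1, t <- below s] by [].
apply/allpairsP/andP => [[[b t'] [bi t'b ->]]|[/eqP st H]].
  move: bi t'b; rewrite [(b, t').1]/= [(b, t').2]/= mem_iota add0n ltnS IH.
  move=> bi /andP[/eqP st' H]; split; first by rewrite /= st'.
  by apply/forallP => -[[|i] ilt] //; exact: (forallP H (Ordinal (ilt : (i < size s)%N))).
case: t st H => [//|b t'] [st'] H; exists (b, t'); rewrite [(b, t').1]/= [(b, t').2]/=.
split => //; first by rewrite mem_iota add0n ltnS; exact: (forallP H (@Ordinal (size s).+1 0 isT)).
rewrite IH st' eqxx /=; apply/forallP => -[i ilt].
exact: (forallP H (Ordinal (ilt : (i.+1 < (size s).+1)%N))).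
Qed.

Lemma below_uniq s : uniq (below s).
Proof.
elim: s => [//|a s IH]; apply: allpairs_uniq => //; first exact: iota_uniq.
by move=> [b t] [b' t'] _ _ /= [-> ->].
Qed.

Lemma mem_belowP s t : t \in below s ->
  size t = size s /\ forall i, (nth 0%N t i <= nth 0%N s i)%N.
Proof.
rewrite mem_below => /andP[/eqP st H]; split => // i.
have [ilt|ige] := ltnP i (size s); first exact: (forallP H (Ordinal ilt)).
by rewrite nth_default ?st.
Qed.

Lemma nth_subl s t i : size t = size s ->
  nth 0%N (subl s t) i = (nth 0%N s i - nth 0%N t i)%N.
Proof.
move=> st; have [ilt|ige] := ltnP i (size s).
  by rewrite (nth_map (0, 0)%N) ?size_zip ?st ?minnn // nth_zip.
by rewrite !nth_default ?st // size_map size_zip st minnn.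
Qed.

(* Indexed like the sum defining mulU. *)
Definition splits (r : S) : seq (S * S) :=
  [seq (toS t, toS (subl (proj1_sig r) t)) | t <- below (proj1_sig r)].

Lemma mem_splits r p : (p \in splits r) = (addS p.1 p.2 == r).
Proof.
apply/mapP/eqP => [[t tb ->]|<-] /=.
  have [st H] := mem_belowP tb.
  by apply: S_eq => i; rewrite coord_addS !coord_toS nth_subl // subnKC.
pose s := proj1_sig (addS p.1 p.2).
pose t := mkseq (Defs.coord p.1) (size s).
have ct i : Defs.coord p.1 i = nth 0%N t i.
  have [ilt|ige] := ltnP i (size s); first by rewrite nth_mkseq.
  rewrite nth_default ?size_mkseq //.
  have : Defs.coord (addS p.1 p.2) i = 0%N by rewrite /Defs.coord nth_default.
  by rewrite coord_addS => /eqP; rewrite addn_eq0 => /andP[/eqP].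
have tb : t \in below s.
  rewrite mem_below size_mkseq eqxx /=; apply/forallP => i.
  by rewrite -ct; have := coord_addS p.1 p.2 i; rewrite /Defs.coord => ->; exact: leq_addr.
exists t => //; apply: injective_projections => /=.
  by apply: S_eq => i; rewrite coord_toS ct.
apply: S_eq => i; rewrite coord_toS nth_subl ?size_mkseq //.
by rewrite nth_trim nth_addl -ct addKn.
Qed.

Lemma splits_uniq r : uniq (splits r).
Proof.
rewrite map_inj_in_uniq ?below_uniq // => t t' tb t'b [e _].
have [st _] := mem_belowP tb; have [st' _] := mem_belowP t'b.
apply: (@eq_from_nth _ 0%N); first by rewrite st st'.
by move=> i _; rewrite -(nth_trim t) -(nth_trim t') e.
Qed.

End Multiindices.

Section FormalPowerSeries.
Variable R : realType.
Local Notation C := (complex R).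
Implicit Types a b c : fps R.

(* Coefficients of order at most n of a product only involve the truncations
   at order n, so the ring laws of mulP follow from those of {poly C}. *)
Definition fps_trunc (n : nat) a : {poly C} := \poly_(i < n.+1) a i.

Lemma coef_fps_trunc n a k : (k <= n)%N -> (fps_trunc n a)`_k = a k.
Proof. by move=> kn; rewrite coef_poly ltnS kn. Qed.

Lemma mulP_trunc a b n k : (k <= n)%N -> mulP a b k = (fps_trunc n a * fps_trunc n b)`_k.
Proof.
move=> kn; rewrite coefM; apply: eq_bigr => j _.
have jn : (j <= n)%N by rewrite -ltnS; apply: leq_trans (ltn_ord j) _.
by rewrite !coef_fps_trunc // (leq_trans (leq_subr _ _) kn).
Qed.

Lemma mulPA a b c : mulP (mulP a b) c = mulP a (mulP b c).
Proof.
apply: funext => n.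
have -> : mulP (mulP a b) c n = (fps_trunc n a * fps_trunc n b * fps_trunc n c)`_n.
  rewrite coefM; apply: eq_bigr => k _; have kn : (k <= n)%N by rewrite -ltnS.
  by rewrite -(mulP_trunc _ _ kn) coef_fps_trunc // leq_subr.
have -> : mulP a (mulP b c) n = (fps_trunc n a * (fps_trunc n b * fps_trunc n c))`_n.
  rewrite coefM; apply: eq_bigr => k _; have kn : (k <= n)%N by rewrite -ltnS.
  by rewrite -(mulP_trunc _ _ (leq_subr k n)) coef_fps_trunc.
by rewrite mulrA.
Qed.

Lemma mulPC a b : mulP a b = mulP b a.
Proof. by apply: funext => n; rewrite !(mulP_trunc _ _ (leqnn n)) mulrC. Qed.

Lemma mulP1 a : mulP a (@oneP R) = a.
Proof.
have trunc1 n : fps_trunc n (@oneP R) = 1.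
  by apply/polyP => k; rewrite coef_poly coef1 /oneP; case: k => [|k] //=; case: ifP.
by apply: funext => n; rewrite (mulP_trunc _ _ (leqnn n)) trunc1 mulr1 coef_fps_trunc.
Qed.

Lemma mul1P a : mulP (@oneP R) a = a.
Proof. by rewrite mulPC mulP1. Qed.

Definition expP b (k : nat) : fps R := iter k (mulP b) (@oneP R).

Lemma expPD b k l : expP b (k + l) = mulP (expP b k) (expP b l).
Proof.
elim: k => [|k IH]; first by rewrite add0n /= mul1P.
by rewrite addSn /= IH mulPA.
Qed.

(* monoP bs s j = prod_i (bs (j + i)) ^ (s_i), the monomial with exponent
   sequence s in the series bs j, bs (j + 1), ... *)
Fixpoint monoP (bs : nat -> fps R) (s : seq nat) (j : nat) : fps R :=
  match s with
  | [::] => @oneP R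
  | a :: s' => mulP (expP (bs j) a) (monoP bs s' j.+1)
  end.

Lemma monoP_trim bs s j : monoP bs (trim s) j = monoP bs s j.
Proof.
elim: s j => [//|a s IH] j /=.
case: ifP => [/andP[/eqP -> /nilP st]|_] /=; last by rewrite IH.
by rewrite mul1P -IH st.
Qed.

Lemma monoP_addl bs s t j : monoP bs (addl s t) j = mulP (monoP bs s j) (monoP bs t j).
Proof.
elim: s t j => [|a s IH] [|b t] j /=; rewrite ?mul1P ?mulP1 //.
rewrite IH expPD -!mulPA; congr mulP.
by rewrite !mulPA (mulPC (expP _ b)).
Qed.

Lemma monoP_unit bs i j : monoP bs (rcons (nseq i 0%N) 1%N) j = bs (i + j)%N.
Proof.
elim: i j => [|i IH] j /=; first by rewrite mulP1 /expP /= mulP1.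
by rewrite mul1P IH addSnnS.
Qed.

Lemma mulP_bound a b (A B : R) N :
  (forall k, (k <= N)%N -> cabs (a k) <= A) -> (forall k, (k <= N)%N -> cabs (b k) <= B) ->
  forall k, (k <= N)%N -> cabs (mulP a b k) <= N.+1%:R * (A * B).
Proof.
move=> Ha Hb k kN.
have A0 : 0 <= A by apply: le_trans (cabs_ge0 _) (Ha 0%N isT).
have B0 : 0 <= B by apply: le_trans (cabs_ge0 _) (Hb 0%N isT).
apply: le_trans (cabs_sum_le _ _) _.
apply: le_trans (_ : \sum_(i < k.+1) (A * B) <= _).
  apply: ler_sum => i _; rewrite cabsM; apply: ler_pM; rewrite ?cabs_ge0 //.
    by apply: Ha; apply: leq_trans (leq_ord i) kN.
  by apply: Hb; apply: leq_trans (leq_subr _ _) kN.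
rewrite sumr_const card_ord -[in leLHS]mulr_natl; apply: ler_wpM2r; first exact: mulr_ge0.
by rewrite ler_nat ltnS.
Qed.

Lemma mulP_expP_bound b (M : R) N :
  (forall k, (k <= N)%N -> cabs (b k) <= M) ->
  forall (p : nat) c (x : R), (forall k, (k <= N)%N -> cabs (c k) <= x) ->
  forall k, (k <= N)%N -> cabs (mulP (expP b p) c k) <= (N.+1%:R * M) ^+ p * x.
Proof.
move=> Hb; elim => [|p IH] c x Hc k kN; first by rewrite mul1P expr0 mul1r; exact: Hc.
rewrite /expP /= mulPA -/(expP b p).
by apply: le_trans (mulP_bound Hb (IH c x Hc) kN) _; rewrite exprS !mulrA.
Qed.

Lemma monoP_bound bs (M : R) N : (forall i k, (k <= N)%N -> cabs (bs i k) <= M) ->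
  forall s j k, (k <= N)%N -> cabs (monoP bs s j k) <= (N.+1%:R * M) ^+ sumn s.
Proof.
move=> HM; elim => [|p s IH] j k kN /=.
  by rewrite expr0 /oneP; case: eqP; rewrite ?cabs1 ?cabs0 ?ler01.
by apply: le_trans (mulP_expP_bound (HM j) p (IH j.+1) kN) _; rewrite exprD.
Qed.

End FormalPowerSeries.

Section SeminormBounds.
Variable R : realType.
Local Notation C := (complex R).
Local Notation series := (series R).
Implicit Types (f g : series).

Definition qm_term (m : nat) f (r : S) : R := cabs (f r) * m%:R ^+ sz r.

Lemma qm_term_ge0 m f r : 0 <= qm_term m f r.
Proof. by rewrite mulr_ge0 ?cabs_ge0 // exprn_ge0 // ler0n. Qed.

Lemma qm_fin_num m f : (qm m f < +oo)%E -> qm m f \is a fin_num.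
Proof.
by move=> H; rewrite ge0_fin_numE // esum_ge0 // => r _; rewrite lee_fin qm_term_ge0.
Qed.

Lemma sum_qm_term_le m f (F : seq S) : (qm m f < +oo)%E -> uniq F ->
  \sum_(r <- F) qm_term m f r <= fine (qm m f).
Proof.
by move=> H u; rewrite -lee_fin fineK ?qm_fin_num //; apply: esum_ge_seq u => r; exact: qm_term_ge0.
Qed.

Lemma qm_le m f (B : R) :
  (forall F : seq S, uniq F -> \sum_(r <- F) qm_term m f r <= B) -> (qm m f <= B%:E)%E.
Proof. exact: esum_le_seq. Qed.

Lemma inU_bounded_sums f m : inU f -> bounded_sums (qm_term m f).
Proof. by move=> H; exists (fine (qm m f)) => F u; exact: sum_qm_term_le. Qed.

Lemma bounded_sums_inU f : (forall m, bounded_sums (qm_term m f)) -> inU f.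
Proof. by move=> H m; have [B HB] := H m; exact: le_lt_trans (qm_le HB) (ltry _). Qed.

Definition zeroU : series := fun _ => 0.
Definition delta (x : S) : series := fun r => if r == x then 1 else 0.
Definition restr (P : pred S) f : series := fun r => if P r then f r else 0.

Lemma sum_pred1_le (w : S -> R) (x : S) (F : seq S) : uniq F -> (forall r, 0 <= w r) ->
  \sum_(r <- F) (if r == x then w r else 0) <= w x.
Proof.
move=> u w0; rewrite -big_mkcond /=; case: (boolP (x \in F)) => xF.
  rewrite (big_rem x) //= eqxx big_seq_cond big1 ?addr0 // => y /andP[].
  by rewrite mem_rem_uniq // inE => /andP[/negPf ->].
by rewrite big_seq_cond big1 // => y /andP[yF /eqP yx]; move: xF; rewrite -yx yF.
Qed.

Lemma qm_scale_delta_le m (c : C) x :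
  (qm m (scaleU c (delta x)) <= (cabs c * m%:R ^+ sz x)%:E)%E.
Proof.
have w0 r : 0 <= cabs c * m%:R ^+ sz r by rewrite mulr_ge0 ?cabs_ge0 ?exprn_ge0 ?ler0n.
apply: qm_le => F u; apply: le_trans (sum_pred1_le x u w0); apply: ler_sum => r _.
rewrite /qm_term /scaleU /delta; case: ifP => _; first by rewrite mulr1.
by rewrite mulr0 cabs0 mul0r.
Qed.

Lemma zeroU_inU1 : inU1 zeroU.
Proof.
split => // m; apply: le_lt_trans (qm_le (B := 0) _) (ltry _) => F u.
by rewrite big1 // => r _; rewrite /qm_term cabs0 mul0r.
Qed.

Lemma inU1_restr P f : inU1 f -> inU1 (restr P f).
Proof.
move=> [fU f1]; split; last by move=> r /f1; rewrite /restr => ->; case: (P r).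
apply: bounded_sums_inU => m; have [B HB] := inU_bounded_sums m fU; exists B => F u.
apply: le_trans (HB F u); apply: ler_sum => r _; rewrite /qm_term /restr.
by case: (P r) => //; rewrite cabs0 mul0r; exact: qm_term_ge0.
Qed.

Lemma inU1_scale c f : inU1 f -> inU1 (scaleU c f).
Proof.
move=> [fU f1]; split; last by move=> r /f1; rewrite /scaleU => ->; rewrite mulr0.
apply: bounded_sums_inU => m; have [B HB] := inU_bounded_sums m fU.
exists (cabs c * B) => F u; rewrite /qm_term /scaleU.
under eq_bigr do rewrite cabsM -mulrA.
by rewrite -mulr_sumr; apply: ler_wpM2l; [exact: cabs_ge0 | exact: HB].
Qed.

Lemma delta_inU1 x : sz x = 1%N -> inU1 (delta x).
Proof.
move=> x1; split; last by move=> r; rewrite /delta; case: eqP => // -> /(_ x1).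
move=> m; rewrite -[delta x](funext (fun r => mul1r (delta x r))).
exact: le_lt_trans (qm_scale_delta_le m 1 x) (ltry _).
Qed.

Lemma qm_sub_restr_small f m (d : R) : (qm m f < +oo)%E -> 0 < d ->
  exists F1 : seq S, forall F : seq S, uniq F -> {subset F1 <= F} ->
    (qm m (subU (restr (mem F) f) f) < d%:E)%E.
Proof.
move=> fin d0; have d2 : 0 < d / 2 by rewrite divr_gt0.
have [F1 [u1 HF1]] := esum_approx_seq (qm_term_ge0 m f) fin d2.
exists F1 => F uF sub; apply: le_lt_trans (qm_le (B := d / 2) _) _; last first.
  by rewrite lte_fin ltr_pdivrMr // ltr_pMr // ltr1n.
move=> X uX.
have -> : \sum_(r <- X) qm_term m (subU (restr (mem F) f) f) r =
          \sum_(r <- X | r \notin F) qm_term m f r.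
  rewrite [RHS]big_mkcond /=; apply: eq_bigr => r _; rewrite /qm_term /subU /restr /=.
  by case: (r \in F); rewrite /= ?subrr ?cabs0 ?mul0r // sub0r cabsN.
have uXF : uniq ([seq r <- X | r \notin F] ++ F).
  rewrite cat_uniq filter_uniq // uF andbT /=; apply/hasPn => r rF.
  by rewrite mem_filter rF.
have := sum_qm_term_le fin uXF; rewrite big_cat /= big_filter.
have := sum_le_sub_seq (qm_term_ge0 m f) u1 uF sub.
move: HF1; rewrite /qm; lra.
Qed.

End SeminormBounds.

Section Extension.
Variable R : realType.
Local Notation C := (complex R).
Local Notation series := (series R).
Local Notation fps := (fps R).
Implicit Types (f g : series).

Variable beta : series -> fps.
Hypothesis beta_lin : linearOn (@inU1 R) beta.
Hypothesis beta_cont : contOn (@inU1 R) beta.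

Definition beta_var (i : nat) : fps := beta (delta R (unitS i)).

Definition beta_mono (r : S) : fps := monoP beta_var (proj1_sig r) 0.

Definition betabar f : fps := fun n => sum_of (fun r => f r * beta_mono r n).

Lemma beta_zeroU : beta (zeroU R) = fun _ => 0.
Proof.
have e : scaleU 0 (zeroU R) = zeroU R by apply: funext => r; rewrite /scaleU mul0r.
have := beta_lin.2 0 _ (zeroU_inU1 R); rewrite e => ->.
by apply: funext => n; rewrite /scaleP mul0r.
Qed.

Lemma beta_scale_delta c x : sz x = 1%N ->
  beta (scaleU c (delta R x)) = scaleP c (beta (delta R x)).
Proof. by move=> x1; rewrite (beta_lin.2 _ _ (delta_inU1 R x1)). Qed.

Lemma beta_mono_unitS i : beta_mono (unitS i) = beta_var i.
Proof. by rewrite /beta_mono /= monoP_trim monoP_unit addn0. Qed.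

Lemma beta_mono_unit x : sz x = 1%N -> beta_mono x = beta (delta R x).
Proof. by move=> x1; rewrite (sz_eq1 x1) beta_mono_unitS. Qed.

Lemma beta_monoD a b : beta_mono (addS a b) = mulP (beta_mono a) (beta_mono b).
Proof. by rewrite /beta_mono /= monoP_trim monoP_addl. Qed.

(* Continuity of beta at 0 with eps = 1, tested on c X_i for a small c > 0. *)
Lemma beta_var_bounded N :
  exists M : R, forall i k, (k <= N)%N -> cabs (beta_var i k) <= M.
Proof.
have [m [d [d0 Hd]]] := beta_cont (zeroU_inU1 R) N ltr01.
have m1 : 0 < m.+1%:R :> R by rewrite ltr0n.
pose c := d / m.+1%:R; have c0 : 0 < c by rewrite divr_gt0.
exists c^-1 => i k kN; pose g := scaleU c%:C%C (delta R (unitS i)).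
have gU1 : inU1 g by apply/inU1_scale/delta_inU1; exact: sz_unitS.
have gq : (qm m (subU g (zeroU R)) < d%:E)%E.
  have -> : subU g (zeroU R) = g by apply: funext => r; rewrite /subU subr0.
  apply: le_lt_trans (qm_scale_delta_le m c%:C%C (unitS i)) _.
  rewrite cabs_RtoC gtr0_norm // sz_unitS expr1 lte_fin /c mulrAC ltr_pdivrMr //.
  by rewrite ltr_pM2l // ltr_nat.
have := Hd g gU1 gq k kN.
rewrite beta_zeroU subr0 beta_scale_delta ?sz_unitS // /scaleP cabsM cabs_RtoC gtr0_norm //.
by rewrite -/(beta_var i) -[c^-1]mul1r ler_pdivlMr // mulrC => /ltW.
Qed.

Lemma beta_mono_bounded N : exists m : nat,
  forall r k, (k <= N)%N -> cabs (beta_mono r k) <= m%:R ^+ sz r.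
Proof.
have [M HM] := beta_var_bounded N; pose L := N.+1%:R * M.
have L0 : 0 <= L by rewrite mulr_ge0 ?ler0n // (le_trans (cabs_ge0 _) (HM 0%N 0%N (leq0n N))).
exists (Num.truncn L).+1 => r k kN; apply: le_trans (monoP_bound HM _ _ kN) _.
by apply: lerXn2r; rewrite ?nnegrE ?ler0n // ltW // truncnS_gt.
Qed.

Lemma bounded_sums_beta_mono f n : inU f -> bounded_sums (fun r => cabs (f r * beta_mono r n)).
Proof.
move=> fU; have [m Hm] := beta_mono_bounded n; have [B HB] := inU_bounded_sums m fU.
exists B => F u; apply: le_trans (HB F u); apply: ler_sum => r _.
by rewrite cabsM; apply: ler_wpM2l; [exact: cabs_ge0 | exact: Hm].
Qed.

Lemma has_sum_betabar f n : inU f -> has_sum (fun r => f r * beta_mono r n) (betabar f n).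
Proof.
move=> fU; have [z Hz] := has_sum_exists (bounded_sums_beta_mono n fU).
by rewrite /betabar (sum_ofE Hz).
Qed.

Lemma betabarD f g : inU f -> inU g -> betabar (addU f g) = addP (betabar f) (betabar g).
Proof.
move=> fU gU; apply: funext => n; apply: sum_ofE.
apply: eq_has_sum (has_sumD (has_sum_betabar n fU) (has_sum_betabar n gU)) => r.
by rewrite /addU mulrDl.
Qed.

Lemma betabarZ c f : inU f -> betabar (scaleU c f) = scaleP c (betabar f).
Proof.
move=> fU; apply: funext => n; apply: sum_ofE.
by apply: eq_has_sum (has_sumZ c (has_sum_betabar n fU)) => r; rewrite /scaleU mulrA.
Qed.

Lemma betabar1 : betabar (@oneU R) = @oneP R.
Proof.
apply: funext => n; have H y : y != toS [::] -> oneU R y * beta_mono y n = 0.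
  move=> ny; rewrite /oneU; case: eqP => [/sz_eq0 y0|_]; last exact: mul0r.
  by move: ny; rewrite y0 eqxx.
by rewrite /betabar (sum_ofE (has_sum1 H)) /oneU sz_toS /= mul1r.
Qed.

(* Cauchy product of the two absolutely summable families, regrouped along
   the fibres r' + r'' = r. *)
Lemma betabarM f g : inU f -> inU g -> betabar (mulU f g) = mulP (betabar f) (betabar g).
Proof.
move=> fU gU; apply: funext => n; apply: sum_ofE.
pose H (p : S * S) := f p.1 * g p.2 * beta_mono (addS p.1 p.2) n.
have Hk (k : 'I_n.+1) : has_sum
    (fun p : S * S => (f p.1 * beta_mono p.1 k) * (g p.2 * beta_mono p.2 (n - k)%N))
    (betabar f k * betabar g (n - k)%N).
  exact: has_sumM (has_sum_betabar k fU) (has_sum_betabar (n - k) gU)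
    (bounded_sums_beta_mono k fU) (bounded_sums_beta_mono (n - k) gU).
have HH : has_sum H (mulP (betabar f) (betabar g) n).
  apply: eq_has_sum (has_sum_big (index_enum 'I_n.+1) Hk) => p.
  by rewrite /H beta_monoD /mulP mulr_sumr; apply: eq_bigr => k _; rewrite mulrACA.
apply: eq_has_sum (has_sum_fibres splits_uniq mem_splits HH) => r.
rewrite big_seq (eq_bigr (fun p => f p.1 * g p.2 * beta_mono r n)); last first.
  by move=> p; rewrite mem_splits /H => /eqP ->.
by rewrite -big_seq -mulr_suml /mulU /splits big_map.
Qed.

Lemma betabar_cont : contOn (@inU R) betabar.
Proof.
move=> f fU N e e0; have [m Hm] := beta_mono_bounded N.
exists m, e; split => // g gU gq n nN.
have fin : (qm m (subU g f) < +oo)%E by exact: lt_trans gq (ltry _).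
have := has_sumB (has_sum_betabar n gU) (has_sum_betabar n fU).
move=> /(has_sum_cabs_le (B := fine (qm m (subU g f)))) le.
apply: le_lt_trans (le _) _; last by rewrite -lte_fin fineK ?qm_fin_num.
move=> F u; apply: le_trans (sum_qm_term_le fin u); apply: ler_sum => r _.
by rewrite -mulrBl cabsM; apply: ler_wpM2l; [exact: cabs_ge0 | exact: Hm].
Qed.

Lemma beta_restr1 f x n : inU1 f -> beta (restr (pred1 x) f) n = f x * beta_mono x n.
Proof.
move=> fU1; have [x1|x1] := eqVneq (sz x) 1%N.
  have -> : restr (pred1 x) f = scaleU (f x) (delta R x).
    apply: funext => r; rewrite /restr /scaleU /delta /=.
    by case: eqP => [->|_]; rewrite ?mulr1 ?mulr0.
  by rewrite beta_scale_delta // beta_mono_unit.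
have -> : restr (pred1 x) f = zeroU R.
  by apply: funext => r; rewrite /restr /zeroU /=; case: eqP => // ->; apply: fU1.2; apply/eqP.
by rewrite beta_zeroU fU1.2 ?mul0r //; apply/eqP.
Qed.

Lemma beta_restr f (F : seq S) n : inU1 f -> uniq F ->
  beta (restr (mem F) f) n = \sum_(x <- F) f x * beta_mono x n.
Proof.
move=> fU1; elim: F => [|x F IH] /=.
  have -> : restr (mem [::]) f = zeroU R by apply: funext.
  by rewrite beta_zeroU big_nil.
move=> /andP[xF uF].
have -> : restr (mem (x :: F)) f = addU (restr (pred1 x) f) (restr (mem F) f).
  apply: funext => r; rewrite /addU /restr /= inE.
  by case: eqP => [->|_] /=; rewrite ?(negPf xF) ?addr0 ?add0r.
by rewrite (beta_lin.1 _ _ (inU1_restr _ fU1) (inU1_restr _ fU1)) /addP IH // big_cons beta_restr1.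
Qed.

(* beta and betabar agree on finite truncations of f, which converge to f. *)
Lemma betabar_ext f : inU1 f -> betabar f = beta f.
Proof.
move=> fU1; apply: funext => n; apply/eqP; rewrite -subr_eq0; apply/eqP/cabs_small_eq0 => e e0.
have e2 : 0 < e / 2 by rewrite divr_gt0.
have [m [d [d0 Hd]]] := beta_cont fU1 n e2.
have [F0 HF0] := has_sum_betabar n fU1.1 e2.
have [F1 HF1] := qm_sub_restr_small (fU1.1 m) d0.
pose F := undup (F0 ++ F1); have uF : uniq F by exact: undup_uniq.
have sub0 : {subset F0 <= F} by move=> r rF0; rewrite mem_undup mem_cat rF0.
have sub1 : {subset F1 <= F} by move=> r rF1; rewrite mem_undup mem_cat rF1 orbT.
have := Hd _ (inU1_restr _ fU1) (HF1 F uF sub1) n (leqnn n).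
rewrite beta_restr // => h1; have h2 := HF0 F uF sub0.
apply: le_lt_trans (distcD _ (\sum_(x <- F) f x * beta_mono x n) _) _.
by rewrite distcC [e]splitr; exact: ltrD h2 h1.
Qed.

End Extension.

Unset Implicit Arguments.
Set Strict Implicit.

Theorem theorem5p8 (R : realType) (beta : series R -> fps R) :
  linearOn (@inU1 R) beta -> contOn (@inU1 R) beta ->
  exists betabar : series R -> fps R,
    unital_alg_homU betabar /\ contOn (@inU R) betabar /\
    (forall f, inU1 f -> betabar f = beta f).
Proof.
move=> beta_lin beta_cont; exists (betabar beta); split; last first.
  by split; [exact: betabar_cont | exact: betabar_ext].
split; first by split => [f g|c f]; [exact: betabarD | exact: betabarZ].
by split; [exact: betabarM | exact: betabar1].
Qed.
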